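(* Consider the linear Gaussian pairwise Markov model $$\alpha_{k+1}=T\alpha_k+By_{k-1}+\eta_k,\qquad y_k=Z\alpha_k+\beta y_{k-1}+\varepsilon_k,\qquad \begin{bmatrix}\eta_k\\ \varepsilon_k\end{bmatrix}\sim\mathcal N\!\left(0,\begin{bmatrix}Q&S\\ S^\top&H\end{bmatrix}\right),$$ $\alpha_0\sim\mathcal N(\bar\alpha_0,\Pi_0)$, $\Pi_0>0$, $H>0$, where $T,B,Z,\beta,Q,S,H,\bar\alpha_0,\Pi_0$ depend differentiably on $\theta\in\mathbb R^p$ while the observations $y_k$ (including the given initial values used below) do not depend on $\theta$. Write $\partial_iA:=\partial A/\partial\theta_i$, $\overline T=T-SH^{-1}Z$, $\overline B=B-SH^{-1}\beta$, $\overline Q=Q-SH^{-1}S^\top$. Algorithm 2a (UD-based pairwise Kalman filter): factor $\Pi_0=\bar U_{\Pi_0}D_{\Pi_0}\bar U_{\Pi_0}^\top$, $H=\bar U_HD_H\bar U_H^\top$, $\overline Q=\bar U_{\overline Q}D_{\overline Q}\bar U_{\overline Q}^\top$; set $\hat\alpha_{0|0}=\bar\alpha_0$, $\bar U_{P_{0|0}}=\bar U_{\Pi_0}$, $D_{P_{0|0}}=D_{\Pi_0}$; for $k=0,\dots,N-1$: $\hat\alpha_{k+1|k}=\overline T\hat\alpha_{k|k}+\overline By_{k-1}+SH^{-1}y_k$; MWGS on $\mathbb A^\top=[\overline T\bar U_{P_{k|k}}\ \bar U_{\overline Q}]$, $\mathbb D_A=D_{P_{k|k}}\oplus D_{\overline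 Q}$ gives $\mathbb R=\bar U_{P_{k+1|k}}$, $\mathbb D_R=D_{P_{k+1|k}}$; MWGS on $\mathbb A^\top=\begin{bmatrix}\bar U_{P_{k+1|k}}&0\\ Z\bar U_{P_{k+1|k}}&\bar U_H\end{bmatrix}$, $\mathbb D_A=D_{P_{k+1|k}}\oplus D_H$ gives $\mathbb R=\begin{bmatrix}\bar U_{P_{k+1|k+1}}&\bar K_{k+1}^u\\0&\bar U_{R_{e,k+1}}\end{bmatrix}$, $\mathbb D_R=D_{P_{k+1|k+1}}\oplus D_{R_{e,k+1}}$; $e_{k+1}=y_{k+1}-Z\hat\alpha_{k+1|k}-\beta y_k$, $\bar e_{k+1}=\bar U_{R_{e,k+1}}^{-1}e_{k+1}$, $\hat\alpha_{k+1|k+1}=\hat\alpha_{k+1|k}+\bar K_{k+1}^u\bar e_{k+1}$. Algorithm 2b (differentiated UD-based pairwise Kalman filter): for each $i=1,\dots,p$, in addition to Algorithm 2a, it initializes $\partial_i\bar U_{P_{0|0}}=\partial_i\bar U_{\Pi_0}$, $\partial_iD_{P_{0|0}}=\partial_iD_{\Pi_0}$, $\partial_i\hat\alpha_{0|0}=\partial_i\bar\alpha_0$ (using $\partial_i\overline T,\partial_i\overline B,\partial_i\overline Q$ and derivatives of the factors of $\overline Q$, $H$), and for $k=0,\dots,N-1$ computes: (a) $\partial_i\hat\alpha_{k+1|k}=(\partial_i\overline T)\hat\alpha_{k|k}+\overline T\,\partial_i\hat\alpha_{k|k}+(\partial_i\overline B)y_{k-1}+(\partial_iS)H^{-1}y_k-SH^{-1}(\partial_iH)H^{-1}y_k$;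 (b) in both MWGS steps, forms the pre-arrays of Algorithm 2a and their derivatives $\partial_i\mathbb A,\partial_i\mathbb D_A$, applies the Diff. UD scheme below, and reads off $\partial_i\bar U_{P_{k+1|k}},\partial_iD_{P_{k+1|k}},\partial_i\bar U_{P_{k+1|k+1}},\partial_iD_{P_{k+1|k+1}},\partial_i\bar U_{R_{e,k+1}},\partial_iD_{R_{e,k+1}},\partial_i\bar K_{k+1}^u$ from the positions of the corresponding undifferentiated blocks; (c) $\partial_i\bar e_{k+1}=-\bar U_{R_{e,k+1}}^{-1}(\partial_i\bar U_{R_{e,k+1}})\bar U_{R_{e,k+1}}^{-1}e_{k+1}-\bar U_{R_{e,k+1}}^{-1}\big[(\partial_iZ)\hat\alpha_{k+1|k}+Z\,\partial_i\hat\alpha_{k+1|k}+(\partial_i\beta)y_k\big]$; (d) $\partial_i\hat\alpha_{k+1|k+1}=\partial_i\hat\alpha_{k+1|k}+(\partial_i\bar K_{k+1}^u)\bar e_{k+1}+\bar K_{k+1}^u\,\partial_i\bar e_{k+1}$. Diff. UD scheme with inputs $\mathbb A,\mathbb D_A,\partial_i\mathbb A,\partial_i\mathbb D_A$: apply MWGS to get $\mathfrak W,\mathbb R,\mathbb D_R$; $M_0=\mathfrak W^\top\mathbb D_A(\partial_i\mathbb A)\mathbb R^{-\top}=\bar L_0+D_0+\bar U_0$ and $M_2=\mathfrak W^\top(\partial_i\mathbb D_A)\mathfrak W=\bar L_2+D_2+\bar U_2$ (strictly lower, diagonal, strictly upper parts); output $\partial_i\mathbb R=\mathbb R(\bar L_0^\top+\bar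 U_0+\bar U_2)\mathbb D_R^{-1}$, $\partial_i\mathbb D_R=2D_0+D_2$. Then Algorithm 2b computes the filter sensitivities of Algorithm 2a correctly: for every $k$ and $i$, the quantities it produces as $\partial_i\hat\alpha_{k+1|k}$, $\partial_i\bar U_{P_{k+1|k}}$, $\partial_iD_{P_{k+1|k}}$, $\partial_i\bar U_{P_{k+1|k+1}}$, $\partial_iD_{P_{k+1|k+1}}$, $\partial_i\bar U_{R_{e,k+1}}$, $\partial_iD_{R_{e,k+1}}$, $\partial_i\bar K_{k+1}^u$, $\partial_i\bar e_{k+1}$, $\partial_i\hat\alpha_{k+1|k+1}$ equal the partial derivatives with respect to $\theta_i$ of the corresponding quantities of Algorithm 2a, regarded as functions of $\theta$.
   Context: $UDU^\top$ factorization: $P=\bar U_PD_P\bar U_P^\top$ with $\bar U_P$ unit upper triangular and $D_P$ diagonal. $A\oplus B:=\mathrm{diag}\{A,B\}$. MWGS: given $\mathbb A\in\mathbb R^{r\times s}$ ($r\ge s$) and diagonal $\mathbb D_A>0$, it returns $\mathfrak W\in\mathbb R^{r\times s}$, a unit upper triangular $\mathbb R\in\mathbb R^{s\times s}$ and a diagonal $\mathbb D_R$ with $\mathbb A^\top=\mathbb R\mathfrak W^\top$ and $\mathfrak W^\top\mathbb D_A\mathfrak W=\mathbb D_R$. It is assumed that every MWGS call is well defined (with $\mathbb D_R$ invertible) and that all quantities are differentiable in $\theta$. *)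

From HB Require Import structures.
From mathcomp Require Import all_boot all_order all_algebra.
From mathcomp Require Import all_classical all_reals all_analysis.
Set Implicit Arguments.
Unset Strict Implicit.
Unset Printing Implicit Defensive.
Import Order.TTheory GRing.Theory Num.Theory.
Import numFieldNormedType.Exports.
Local Open Scope ring_scope.

Definition unit_upper (R : pzRingType) (n : nat) (U : 'M[R]_n) : Prop :=
  (forall i : 'I_n, U i i = 1) /\ (forall i j : 'I_n, (j < i)%N -> U i j = 0).

Definition diagonal (R : pzRingType) (n : nat) (D : 'M[R]_n) : Prop :=
  forall i j : 'I_n, i != j -> D i j = 0.

Definition posdiag (R : numDomainType) (n : nat) (D : 'M[R]_n) : Prop :=
  diagonal D /\ forall i : 'I_n, 0 < D i i.

Definition posdef (R : numDomainType) (n : nat) (P : 'M[R]_n) : Prop :=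
  P^T = P /\ forall v : 'cV[R]_n, v != 0 -> 0 < (v^T *m P *m v) 0 0.

Definition psd (R : numDomainType) (n : nat) (P : 'M[R]_n) : Prop :=
  P^T = P /\ forall v : 'cV[R]_n, 0 <= (v^T *m P *m v) 0 0.

Definition UDU (R : numDomainType) (n : nat) (U D P : 'M[R]_n) : Prop :=
  unit_upper U /\ posdiag D /\ P = U *m D *m U^T.

Definition slower (R : pzRingType) (n : nat) (M : 'M[R]_n) : 'M[R]_n :=
  \matrix_(i, j) (if (j < i)%N then M i j else 0).
Definition dpart (R : pzRingType) (n : nat) (M : 'M[R]_n) : 'M[R]_n :=
  \matrix_(i, j) (if i == j then M i j else 0).
Definition supper (R : pzRingType) (n : nat) (M : 'M[R]_n) : 'M[R]_n :=
  \matrix_(i, j) (if (i < j)%N then M i j else 0).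

Definition mwgs_fun (R : pzRingType) : Type :=
  forall r s : nat, 'M[R]_(r, s) -> 'M[R]_r -> 'M[R]_(r, s) * 'M[R]_s * 'M[R]_s.

(* Specification of MWGS: for A (r x s) and diagonal D_A > 0, whenever the call
   is well defined (A of full column rank s, which forces r >= s), it returns W,
   a unit upper triangular R and a diagonal invertible D_R with
   A^T = R W^T and W^T D_A W = D_R. *)
Definition MWGS_spec (R : realFieldType) (mwgs : mwgs_fun R) : Prop :=
  forall (r s : nat) (A : 'M[R]_(r, s)) (DA : 'M[R]_r),
    posdiag DA -> \rank A = s ->
    let: (W, Rm, DR) := mwgs r s A DA in
    [/\ A^T = Rm *m W^T, unit_upper Rm, W^T *m DA *m W = DR,
        diagonal DR & DR \in unitmx].

Definition diffUD (R : realFieldType) (mwgs : mwgs_fun R) (r s : nat)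
    (A : 'M[R]_(r, s)) (DA : 'M[R]_r) (dA : 'M[R]_(r, s)) (dDA : 'M[R]_r)
    : 'M[R]_s * 'M[R]_s :=
  let: (W, Rm, DR) := mwgs r s A DA in
  let M0 := W^T *m DA *m dA *m (invmx Rm)^T in
  let M2 := W^T *m dDA *m W in
  (Rm *m ((slower M0)^T + supper M0 + supper M2) *m invmx DR,
   (dpart M0) *+ 2 + dpart M2).

(* Model data at a fixed parameter value (or their partial derivatives) *)

Record params (R : pzRingType) (n m : nat) := Params {
  pT : 'M[R]_n;  pB : 'M[R]_(n, m);  pZ : 'M[R]_(m, n);  pbeta : 'M[R]_m;
  pS : 'M[R]_(n, m);  pH : 'M[R]_m;  palpha0 : 'cV[R]_n;
  pUPi0 : 'M[R]_n;  pDPi0 : 'M[R]_n;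
  pUH : 'M[R]_m;  pDH : 'M[R]_m;
  pUQ : 'M[R]_n;  pDQ : 'M[R]_n          (* Qbar = UQ DQ UQ^T *)
}.

Record step_out (R : pzRingType) (n m : nat) := StepOut {
  a_pred : 'cV[R]_n;
  W1 : 'M[R]_(n + n, n);
  U_pred : 'M[R]_n;
  D_pred : 'M[R]_n;
  W2 : 'M[R]_(n + m, n + m);
  U_filt : 'M[R]_n;
  D_filt : 'M[R]_n;
  K_u : 'M[R]_(n, m);
  U_Re : 'M[R]_m;
  D_Re : 'M[R]_m;
  e_inn : 'cV[R]_m;
  ebar : 'cV[R]_m;
  a_filt : 'cV[R]_n
}.

(* The observations: y : int -> 'cV_m, y j = y_j (j = -1, 0, 1, ...). *)

Definition alg2a_step (R : realFieldType) (n m : nat) (mwgs : mwgs_fun R)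
    (P : params R n m) (y : int -> 'cV[R]_m) (k : nat)
    (st : 'cV[R]_n * 'M[R]_n * 'M[R]_n) : step_out R n m :=
  let: (a, U, D) := st in
  let Hinv := invmx (pH P) in
  let Tb := pT P - pS P *m Hinv *m pZ P in
  let Bb := pB P - pS P *m Hinv *m pbeta P in
  let ap := Tb *m a + Bb *m y (Posz k - 1) + pS P *m Hinv *m y (Posz k) in
  let A1 := (row_mx (Tb *m U) (pUQ P))^T in
  let DA1 := block_mx D 0 0 (pDQ P) in
  let: (W1', Up, Dp) := mwgs (n + n)%N n A1 DA1 in
  let A2 := (block_mx Up 0 (pZ P *m Up) (pUH P))^T in
  let DA2 := block_mx Dp 0 0 (pDH P) in
  let: (W2', R2, DR2) := mwgs (n + m)%N (n + m)%N A2 DA2 in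
  let Uf := ulsubmx R2 in let K := ursubmx R2 in let URe := drsubmx R2 in
  let Df := ulsubmx DR2 in let DRe := drsubmx DR2 in
  let e := y (Posz k.+1) - pZ P *m ap - pbeta P *m y (Posz k) in
  let eb := invmx URe *m e in
  StepOut ap W1' Up Dp W2' Uf Df K URe DRe e eb (ap + K *m eb).

Fixpoint alg2a_state (R : realFieldType) (n m : nat) (mwgs : mwgs_fun R)
    (P : params R n m) (y : int -> 'cV[R]_m) (k : nat)
    : 'cV[R]_n * 'M[R]_n * 'M[R]_n :=
  match k with
  | 0 => (palpha0 P, pUPi0 P, pDPi0 P)
  | k'.+1 => let so := alg2a_step mwgs P y k' (alg2a_state mwgs P y k') in
             (a_filt so, U_filt so, D_filt so)
  end.

(* Quantities computed by Algorithm 2a at step k (time index k+1) *)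
Definition alg2a (R : realFieldType) (n m : nat) (mwgs : mwgs_fun R)
    (P : params R n m) (y : int -> 'cV[R]_m) (k : nat) : step_out R n m :=
  alg2a_step mwgs P y k (alg2a_state mwgs P y k).

Record dstep_out (R : pzRingType) (n m : nat) := DStepOut {
  d_a_pred : 'cV[R]_n;  d_U_pred : 'M[R]_n;  d_D_pred : 'M[R]_n;
  d_U_filt : 'M[R]_n;  d_D_filt : 'M[R]_n;
  d_U_Re : 'M[R]_m;  d_D_Re : 'M[R]_m;  d_K_u : 'M[R]_(n, m);
  d_ebar : 'cV[R]_m;  d_a_filt : 'cV[R]_n
}.

(* One step of Algorithm 2b for a fixed direction i; dP holds the partial
   derivatives d_i of the model data, (da, dU, dD) the sensitivities of the
   state at time k|k, st the state of Algorithm 2a at time k|k. *)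
Definition alg2b_step (R : realFieldType) (n m : nat) (mwgs : mwgs_fun R)
    (P dP : params R n m) (y : int -> 'cV[R]_m) (k : nat)
    (st dst : 'cV[R]_n * 'M[R]_n * 'M[R]_n) : dstep_out R n m :=
  let: (a, U, D) := st in
  let: (da, dU, dD) := dst in
  let so := alg2a_step mwgs P y k st in
  let Hinv := invmx (pH P) in
  let dHinv := - (Hinv *m pH dP *m Hinv) in
  let Tb := pT P - pS P *m Hinv *m pZ P in
  let dTb := pT dP - (pS dP *m Hinv *m pZ P + pS P *m dHinv *m pZ P
                      + pS P *m Hinv *m pZ dP) in
  let dBb := pB dP - (pS dP *m Hinv *m pbeta P + pS P *m dHinv *m pbeta P
                      + pS P *m Hinv *m pbeta dP) in
  let dap := dTb *m a + Tb *m da + dBb *m y (Posz k - 1)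
             + pS dP *m Hinv *m y (Posz k)
             - pS P *m Hinv *m pH dP *m Hinv *m y (Posz k) in
  let A1 := (row_mx (Tb *m U) (pUQ P))^T in
  let DA1 := block_mx D 0 0 (pDQ P) in
  let dA1 := (row_mx (dTb *m U + Tb *m dU) (pUQ dP))^T in
  let dDA1 := block_mx dD 0 0 (pDQ dP) in
  let: (dUp, dDp) := diffUD mwgs A1 DA1 dA1 dDA1 in
  let Up := U_pred so in let Dp := D_pred so in
  let A2 := (block_mx Up 0 (pZ P *m Up) (pUH P))^T in
  let DA2 := block_mx Dp 0 0 (pDH P) in
  let dA2 := (block_mx dUp 0 (pZ dP *m Up + pZ P *m dUp) (pUH dP))^T in
  let dDA2 := block_mx dDp 0 0 (pDH dP) in
  let: (dR2, dDR2) := diffUD mwgs A2 DA2 dA2 dDA2 in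
  let dUf := ulsubmx dR2 in let dK := ursubmx dR2 in let dURe := drsubmx dR2 in
  let dDf := ulsubmx dDR2 in let dDRe := drsubmx dDR2 in
  let UReinv := invmx (U_Re so) in
  let deb := - (UReinv *m dURe *m UReinv *m e_inn so)
             - UReinv *m (pZ dP *m a_pred so + pZ P *m dap
                          + pbeta dP *m y (Posz k)) in
  let daf := dap + dK *m ebar so + K_u so *m deb in
  DStepOut dap dUp dDp dUf dDf dURe dDRe dK deb daf.

Fixpoint alg2b_state (R : realFieldType) (n m : nat) (mwgs : mwgs_fun R)
    (P dP : params R n m) (y : int -> 'cV[R]_m) (k : nat)
    : 'cV[R]_n * 'M[R]_n * 'M[R]_n :=
  match k with
  | 0 => (palpha0 dP, pUPi0 dP, pDPi0 dP)
  | k'.+1 => let ds := alg2b_step mwgs P dP y k' (alg2a_state mwgs P y k')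
                                  (alg2b_state mwgs P dP y k') in
             (d_a_filt ds, d_U_filt ds, d_D_filt ds)
  end.

Definition alg2b (R : realFieldType) (n m : nat) (mwgs : mwgs_fun R)
    (P dP : params R n m) (y : int -> 'cV[R]_m) (k : nat) : dstep_out R n m :=
  alg2b_step mwgs P dP y k (alg2a_state mwgs P y k) (alg2b_state mwgs P dP y k).

Definition Qbar (R : realFieldType) (n m : nat)
    (Q : 'M[R]_n) (S : 'M[R]_(n, m)) (H : 'M[R]_m) : 'M[R]_n :=
  Q - S *m invmx H *m S^T.

Definition unitdir (R : pzRingType) (p : nat) (i : 'I_p) : 'rV[R]_p := delta_mx 0 i.

Definition params_at (R : realType) (n m p : nat)
    (T : 'rV[R]_p -> 'M[R]_n) (B : 'rV[R]_p -> 'M[R]_(n, m))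
    (Z : 'rV[R]_p -> 'M[R]_(m, n)) (beta : 'rV[R]_p -> 'M[R]_m)
    (S : 'rV[R]_p -> 'M[R]_(n, m)) (H : 'rV[R]_p -> 'M[R]_m)
    (alpha0 : 'rV[R]_p -> 'cV[R]_n)
    (UPi0 DPi0 : 'rV[R]_p -> 'M[R]_n) (UH DH : 'rV[R]_p -> 'M[R]_m)
    (UQ DQ : 'rV[R]_p -> 'M[R]_n) (th : 'rV[R]_p) : params R n m :=
  Params (T th) (B th) (Z th) (beta th) (S th) (H th) (alpha0 th)
         (UPi0 th) (DPi0 th) (UH th) (DH th) (UQ th) (DQ th).

Definition dparams_at (R : realType) (n m p : nat)
    (T : 'rV[R]_p -> 'M[R]_n) (B : 'rV[R]_p -> 'M[R]_(n, m))
    (Z : 'rV[R]_p -> 'M[R]_(m, n)) (beta : 'rV[R]_p -> 'M[R]_m)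
    (S : 'rV[R]_p -> 'M[R]_(n, m)) (H : 'rV[R]_p -> 'M[R]_m)
    (alpha0 : 'rV[R]_p -> 'cV[R]_n)
    (UPi0 DPi0 : 'rV[R]_p -> 'M[R]_n) (UH DH : 'rV[R]_p -> 'M[R]_m)
    (UQ DQ : 'rV[R]_p -> 'M[R]_n) (th : 'rV[R]_p) (i : 'I_p) : params R n m :=
  let e := unitdir R i in
  Params (derive T th e) (derive B th e) (derive Z th e) (derive beta th e)
         (derive S th e) (derive H th e) (derive alpha0 th e)
         (derive UPi0 th e) (derive DPi0 th e) (derive UH th e) (derive DH th e)
         (derive UQ th e) (derive DQ th e).

Definition alg2a_differentiable (R : realType) (n m p : nat) (mwgs : mwgs_fun R)
    (Pf : 'rV[R]_p -> params R n m) (y : int -> 'cV[R]_m) (N : nat) : Prop :=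
  forall (k : nat) (th : 'rV[R]_p), (k < N)%N ->
    let q := fun th' => alg2a mwgs (Pf th') y k in
    [/\ [/\ differentiable (fun th' => a_pred (q th')) th,
            differentiable (fun th' => W1 (q th')) th,
            differentiable (fun th' => U_pred (q th')) th
          & differentiable (fun th' => D_pred (q th')) th],
        [/\ differentiable (fun th' => W2 (q th')) th,
            differentiable (fun th' => U_filt (q th')) th,
            differentiable (fun th' => D_filt (q th')) th
          & differentiable (fun th' => K_u (q th')) th],
        [/\ differentiable (fun th' => U_Re (q th')) th,
            differentiable (fun th' => D_Re (q th')) th
          & differentiable (fun th' => e_inn (q th')) th]
      & [/\ differentiable (fun th' => ebar (q th')) th
          & differentiable (fun th' => a_filt (q th')) th]].

From Pilot Require Import Defs.
From HB Require Import structures.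
From mathcomp Require Import all_boot all_order all_algebra.
From mathcomp Require Import all_classical all_reals all_analysis.
Set Implicit Arguments.
Unset Strict Implicit.
Unset Printing Implicit Defensive.
Import Order.TTheory GRing.Theory Num.Theory.
Import numFieldNormedType.Exports.
Local Open Scope ring_scope.

(* An MWGS call with output [(W, R, D_R)] satisfies [A^T D_A A = R D_R R^T]
   with [R] unit upper triangular and [D_R] diagonal.  Differentiating this
   identity and conjugating it by [R^-1] gives
   [M0^T + M2 + M0 = X + dD_R + X^T], where [X = R^-1 (dR) D_R] is strictly
   upper triangular because [dR] is (the diagonal of [R] is constant) and
   [D_R] is diagonal.  The strictly upper and diagonal parts of this identity
   determine [X] and [dD_R]: this is the Diff. UD scheme.  The other formulas
   of Algorithm 2b are the product rule and the derivative of a matrix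
   inverse applied to Algorithm 2a, and an induction on the time index
   propagates the sensitivities of the state [(alpha, U_P, D_P)]. *)

(** * Derivatives of matrix-valued functions *)

Section MatrixDerive.
Variables (R : realFieldType) (V : normedModType R).
Implicit Types (x v : V).

Lemma is_derive_unique (W : normedModType R) (f : V -> W) x v df df' :
  is_derive x v f df -> is_derive x v f df' -> df = df'.
Proof. by move=> [_ <-] [_ <-]. Qed.

Lemma is_derive_mxP a b (f : V -> 'M[R]_(a, b)) x v df :
  is_derive x v f df <-> forall i j, is_derive x v (fun t => f t i j) (df i j).
Proof.
split=> [[fd <-] i j|fd].
  have /derivable_mxP/(_ i j) fijd := fd.
  by apply: DeriveDef; rewrite // derive_mx // mxE.
have dfd : derivable f x v by apply/derivable_mxP => i j; case: (fd i j).
apply: DeriveDef; rewrite // derive_mx //.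
by apply/matrixP => i j; rewrite mxE; case: (fd i j).
Qed.

Lemma is_derive_mx_entry0 a b (f : V -> 'M[R]_(a, b)) x v df i j c :
  (forall t, f t i j = c) -> is_derive x v f df -> df i j = 0.
Proof.
move=> fc /is_derive_mxP/(_ i j).
have -> : (fun t => f t i j) = cst c by apply/funext => t; rewrite fc.
by move/is_derive_unique; apply; apply: is_derive_cst.
Qed.

Lemma is_derive_mulmx a b c (f : V -> 'M[R]_(a, b)) (g : V -> 'M[R]_(b, c))
    x v df dg :
  is_derive x v f df -> is_derive x v g dg ->
  is_derive x v (fun t => f t *m g t) (df *m g x + f x *m dg).
Proof.
move=> /is_derive_mxP fd /is_derive_mxP gd; apply/is_derive_mxP => i j.
have -> : (fun t => (f t *m g t) i j) =
    \sum_k ((fun t => f t i k) * (fun t => g t k j)).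
  by apply/funext => t; rewrite mxE fct_sumE.
rewrite !mxE -big_split /=; apply: is_derive_sum => k.
apply: is_derive_eq (is_deriveM (fd i k) (gd k j)) _.
by rewrite addrC [df i k * _]mulrC.
Qed.

Lemma is_derive_trmx a b (f : V -> 'M[R]_(a, b)) x v df :
  is_derive x v f df -> is_derive x v (fun t => (f t)^T) df^T.
Proof.
move/is_derive_mxP=> fd; apply/is_derive_mxP => i j; rewrite !mxE.
by under eq_fun do rewrite !mxE.
Qed.

Lemma is_derive_row_mx a b c (f : V -> 'M[R]_(a, b)) (g : V -> 'M[R]_(a, c))
    x v df dg :
  is_derive x v f df -> is_derive x v g dg ->
  is_derive x v (fun t => row_mx (f t) (g t)) (row_mx df dg).
Proof.
move=> /is_derive_mxP fd /is_derive_mxP gd; apply/is_derive_mxP => i j.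
by case: (split_ordP j) => k ->; rewrite ?row_mxEl ?row_mxEr;
  under eq_fun do rewrite ?row_mxEl ?row_mxEr.
Qed.

Lemma is_derive_col_mx a b c (f : V -> 'M[R]_(a, c)) (g : V -> 'M[R]_(b, c))
    x v df dg :
  is_derive x v f df -> is_derive x v g dg ->
  is_derive x v (fun t => col_mx (f t) (g t)) (col_mx df dg).
Proof.
move=> /is_derive_mxP fd /is_derive_mxP gd; apply/is_derive_mxP => i j.
by case: (split_ordP i) => k ->; rewrite ?col_mxEu ?col_mxEd;
  under eq_fun do rewrite ?col_mxEu ?col_mxEd.
Qed.

Lemma is_derive_block_mx m1 m2 n1 n2 (ful : V -> 'M[R]_(m1, n1))
    (fur : V -> 'M[R]_(m1, n2)) (fdl : V -> 'M[R]_(m2, n1))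
    (fdr : V -> 'M[R]_(m2, n2)) x v dul dur ddl ddr :
  is_derive x v ful dul -> is_derive x v fur dur ->
  is_derive x v fdl ddl -> is_derive x v fdr ddr ->
  is_derive x v (fun t => block_mx (ful t) (fur t) (fdl t) (fdr t))
    (block_mx dul dur ddl ddr).
Proof. by move=> *; do 3![apply: is_derive_col_mx | apply: is_derive_row_mx]. Qed.

Lemma derivable_det n (f : V -> 'M[R]_n) x v :
  (forall i j, derivable (fun t => f t i j) x v) ->
  derivable (fun t => \det (f t)) x v.
Proof.
move=> fd; rewrite /determinant -fct_sumE.
elim/big_ind: _ => [|g h|s _]; [exact: derivable_cst | exact: derivableD |].
apply: derivableM; first exact: derivable_cst.
rewrite -fct_prodE; elim/big_ind: _ => [|g h|i _].
- exact: derivable_cst.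
- exact: derivableM.
- exact: fd.
Qed.

Lemma is_derive_invmx n (f : V -> 'M[R]_n) x v df :
  (forall t, f t \in unitmx) -> is_derive x v f df ->
  is_derive x v (fun t => invmx (f t)) (- (invmx (f x) *m df *m invmx (f x))).
Proof.
(* The entries of [invmx (f t)] are cofactors over the determinant, hence
   derivable; the value comes from differentiating [f t *m invmx (f t) = 1]. *)
move=> fU fd.
have fijd i j : derivable (fun t => f t i j) x v.
  by have /is_derive_mxP/(_ i j)[] := fd.
have finvd : derivable (fun t => invmx (f t)) x v.
  apply/derivable_mxP => i j.
  have -> : (fun t => invmx (f t) i j) = (fun t => (\det (f t))^-1) *
      (cst ((-1) ^+ (j + i)) * (fun t => \det (row' j (col' i (f t))))).
    by apply/funext => t; rewrite /invmx fU !mxE.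
  apply: derivableM; first apply: derivableV.
  - by rewrite -unitfE -unitmxE fU.
  - exact: derivable_det.
  apply: derivableM; first exact: derivable_cst.
  apply: derivable_det => k l.
  have -> : (fun t => row' j (col' i (f t)) k l) =
      (fun t => f t (lift j k) (lift i l)).
    by apply/funext => t; rewrite !mxE.
  exact: fijd.
have := is_derive_mulmx fd (derivableP finvd).
under eq_fun do rewrite mulmxV //.
move/(is_derive_unique (is_derive_cst _ _ _))/eqP; rewrite eq_sym addrC addr_eq0.
move/eqP/(congr1 (mulmx (invmx (f x)))); rewrite mulmxA mulVmx // mul1mx => dE.
by apply: is_derive_eq (derivableP finvd) _; rewrite dE mulmxN mulmxA.
Qed.

End MatrixDerive.

(** * Triangular and diagonal matrices *)

Definition strictly_upper (R : pzRingType) (n : nat) (X : 'M[R]_n) : Prop :=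
  forall i j : 'I_n, (j <= i)%N -> X i j = 0.

Section Triangular.
Variables (R : pzRingType) (n : nat).
Implicit Types (U X D : 'M[R]_n).

Lemma diagonal_trmx D : Defs.diagonal D -> D^T = D.
Proof.
move=> Dd; apply/matrixP => i j; rewrite mxE.
by case: (eqVneq i j) => [->|ij]; rewrite // !Dd // eq_sym.
Qed.

Lemma strictly_upper_mulmx_diag X D :
  strictly_upper X -> Defs.diagonal D -> strictly_upper (X *m D).
Proof.
move=> Xu Dd i j ji; rewrite mxE big1 // => k _.
by case: (eqVneq k j) => [->|kj]; [rewrite Xu ?mul0r | rewrite Dd ?mulr0].
Qed.

(* Back substitution: row [i] of [U X] is row [i] of [X] plus a combination of
   the rows below it. *)
Lemma unit_upper_mulmxK_strict U X :
  unit_upper U -> strictly_upper (U *m X) -> strictly_upper X.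
Proof.
case=> U1 U0 UXu.
suff Xu k (i j : 'I_n) : (n - i <= k)%N -> (j <= i)%N -> X i j = 0.
  by move=> i j; apply: (Xu n); rewrite leq_subr.
elim: k i j => [|k IHk] i j ik ji.
  by move: ik; rewrite leqn0 subn_eq0 leqNgt ltn_ord.
have := UXu i j ji; rewrite mxE (bigD1 i) //= U1 mul1r big1 ?addr0 // => l li.
case: (ltngtP l i) => [lti|gti|/val_inj eli]; last by rewrite eli eqxx in li.
  by rewrite U0 ?mul0r.
rewrite IHk ?mulr0 ?(leq_trans ji (ltnW gti)) //.
by rewrite -ltnS (leq_trans _ ik) // ltn_sub2l // (leq_trans gti).
Qed.

Lemma strictly_upper_diag_split M0 M2 X D :
  M0^T + M2 + M0 = X + D + X^T -> strictly_upper X -> Defs.diagonal D ->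
  X = (slower M0)^T + supper M0 + supper M2 /\ D = dpart M0 *+ 2 + dpart M2.
Proof.
move=> E Xu Dd.
have Eij i j : M0 j i + M2 i j + M0 i j = X i j + D i j + X j i.
  by have /matrixP/(_ i j) := E; rewrite !mxE.
split; apply/matrixP => i j; rewrite !mxE ?mulr2n ?mxE.
  case: (ltngtP i j) => [ij|ji|/val_inj ->]; last by rewrite Xu // !addr0.
    have := Eij i j; rewrite (Xu j i) ?(ltnW ij) // Dd ?neq_ltn ?ij //.
    by rewrite !addr0 => <-; rewrite addrAC.
  by rewrite Xu ?(ltnW ji) // !addr0.
case: (eqVneq i j) => [<-|ij]; last by rewrite Dd // !addr0.
by have := Eij i i; rewrite Xu // addr0 add0r => <-; rewrite addrAC.
Qed.

End Triangular.

Lemma unit_upper_unitmx (R : comUnitRingType) n (U : 'M[R]_n) :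
  unit_upper U -> U \in unitmx.
Proof.
case=> U1 U0; rewrite unitmxE -det_tr det_trig; last first.
  by apply/is_trig_mxP => i j ij; rewrite mxE U0.
rewrite (eq_bigr (fun=> 1)) ?prodr_const ?expr1n ?unitr1 // => i _.
by rewrite mxE U1.
Qed.

Section Blocks.
Variables (R : numDomainType) (n1 n2 : nat).

Lemma posdiag_block_mx (A : 'M[R]_n1) (B : 'M[R]_n2) :
  posdiag A -> posdiag B -> posdiag (block_mx A 0 0 B).
Proof.
case=> Ad Ap [Bd Bp]; split=> [i j|i].
  case: (split_ordP i) => i' ->; case: (split_ordP j) => j' ->;
    rewrite ?block_mxEul ?block_mxEur ?block_mxEdl ?block_mxEdr ?mxE //.
    by move=> ij; apply: Ad; apply: contraNneq ij => ->.
  by move=> ij; apply: Bd; apply: contraNneq ij => ->.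
by case: (split_ordP i) => i' ->; rewrite ?block_mxEul ?block_mxEdr.
Qed.

Variable U : 'M[R]_(n1 + n2).

Lemma unit_upper_drsubmx : unit_upper U -> unit_upper (drsubmx U).
Proof. by case=> U1 U0; split=> [i|i j ji]; rewrite !mxE ?U1 ?U0 //= ltn_add2l. Qed.

Lemma unit_upper_submxK :
  unit_upper U -> U = block_mx (ulsubmx U) (ursubmx U) 0 (drsubmx U).
Proof.
case=> _ U0; rewrite -{1}(submxK U); congr block_mx.
by apply/matrixP => i j; rewrite !mxE U0 //=; apply: ltn_addr.
Qed.

Lemma posdiag_ulsubmx : posdiag U -> posdiag (ulsubmx U).
Proof. by case=> Ud Up; split=> [i j ij|i]; rewrite !mxE // Ud. Qed.

Lemma diagonal_submxK :
  Defs.diagonal U -> U = block_mx (ulsubmx U) 0 0 (drsubmx U).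
Proof.
move=> Ud; rewrite -{1}(submxK U); congr block_mx; apply/matrixP => i j;
  rewrite !mxE Ud //; apply/negP => /eqP/(congr1 val) /= ij.
  by move: (ltn_ord i); rewrite ij ltnNge leq_addr.
by move: (ltn_ord j); rewrite -ij ltnNge leq_addr.
Qed.

End Blocks.

Lemma posdiag_unitmx (R : numFieldType) n (D : 'M[R]_n) : posdiag D -> D \in unitmx.
Proof.
case=> Dd Dp; rewrite unitmxE det_trig; last first.
  by apply/is_trig_mxP => i j ij; rewrite Dd // neq_ltn ij.
by rewrite unitfE gt_eqF // prodr_gt0.
Qed.

(* The diagonal of [W^T D_A W] is a sum of [D_A]-weighted squares, so it is
   nonnegative, and invertibility rules out zero. *)
Lemma posdiag_gram (R : realFieldType) r s (W : 'M[R]_(r, s)) (DA : 'M[R]_r)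
    (DR : 'M[R]_s) :
  posdiag DA -> Defs.diagonal DR -> DR \in unitmx -> W^T *m DA *m W = DR ->
  posdiag DR.
Proof.
move=> [DAd DAp] DRd DRu WE; split=> // i.
have DRi_ge0 : 0 <= DR i i.
  rewrite -WE mxE sumr_ge0 // => k _; rewrite mxE (bigD1 k) //= big1 ?addr0.
    by rewrite mxE mulrAC -expr2 mulr_ge0 ?sqr_ge0 // ltW.
  by move=> l lk; rewrite DAd ?mulr0 ?mul0r // eq_sym.
rewrite lt_def DRi_ge0 andbT; apply/eqP => DRi0.
have /matrixP/(_ i i) := mulmxV DRu.
rewrite !mxE eqxx (bigD1 i) //= DRi0 mul0r add0r big1 => [|j ji].
  by move/eqP; rewrite eq_sym oner_eq0.
by rewrite DRd ?mul0r // eq_sym.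
Qed.

Section Rank.
Variables (R : fieldType) (n m : nat).

Lemma rank_row_mx_unit_upper (X U : 'M[R]_n) :
  unit_upper U -> \rank (row_mx X U)^T = n.
Proof.
move=> Uu; rewrite mxrank_tr; apply/eqP; rewrite eqn_leq rank_leq_row /=.
have XU_U : row_mx X U *m col_mx 0 1%:M = U.
  by rewrite mul_row_col mulmx0 add0r mulmx1.
apply: leq_trans (mxrankM_maxl _ (col_mx 0 1%:M)).
by rewrite XU_U mxrank_unit // unit_upper_unitmx.
Qed.

Lemma rank_block_mx_unit_upper (U1 : 'M[R]_n) (Z : 'M[R]_(m, n)) (U2 : 'M[R]_m) :
  unit_upper U1 -> unit_upper U2 -> \rank (block_mx U1 0 Z U2)^T = (n + m)%N.
Proof.
move=> U1u U2u; rewrite mxrank_tr mxrank_unit // unitmxE det_lblock unitrM.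
by rewrite -!unitmxE !unit_upper_unitmx.
Qed.

End Rank.

(** * The Diff. UD scheme *)

Lemma mwgs_gram (R : comPzRingType) r s (A W : 'M[R]_(r, s)) (DA : 'M[R]_r)
    (Rm DR : 'M[R]_s) :
  A^T = Rm *m W^T -> W^T *m DA *m W = DR -> A^T *m DA *m A = Rm *m DR *m Rm^T.
Proof.
move=> AE WE; have -> : A = W *m Rm^T by rewrite -[A]trmxK AE trmx_mul trmxK.
by rewrite trmx_mul trmxK -WE !mulmxA.
Qed.

Lemma diffUD_eq (R : realFieldType) (mwgs : mwgs_fun R) r s
    (A dA W : 'M[R]_(r, s)) (DA dDA : 'M[R]_r) (Rm DR dR dDR : 'M[R]_s) :
  mwgs r s A DA = (W, Rm, DR) ->
  A^T = Rm *m W^T -> unit_upper Rm -> W^T *m DA *m W = DR ->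
  Defs.diagonal DR -> DR \in unitmx -> Defs.diagonal DA ->
  strictly_upper dR -> Defs.diagonal dDR ->
  dA^T *m DA *m A + A^T *m dDA *m A + A^T *m DA *m dA =
    dR *m DR *m Rm^T + Rm *m dDR *m Rm^T + Rm *m DR *m dR^T ->
  diffUD mwgs A DA dA dDA = (dR, dDR).
Proof.
move=> mwgsE AE Ru WE DRd DRu DAd dRu dDRd dE; rewrite /diffUD mwgsE /=.
have Rmu := unit_upper_unitmx Ru; set Ri := invmx Rm.
have WTE : W^T = Ri *m A^T by rewrite AE mulmxA mulVmx // mul1mx.
have WE' : W = A *m Ri^T by rewrite -[W]trmxK WTE trmx_mul trmxK.
have RRi : Rm^T *m Ri^T = 1%:M by rewrite -trmx_mul mulVmx // trmx1.
set M0 := W^T *m DA *m dA *m Ri^T; set M2 := W^T *m dDA *m W.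
set X := Ri *m dR *m DR.
have Xu : strictly_upper X.
  apply: strictly_upper_mulmx_diag => //; apply: (unit_upper_mulmxK_strict Ru).
  by rewrite mulmxA mulmxV // mul1mx.
suff /strictly_upper_diag_split/(_ Xu dDRd)[XE ->] : M0^T + M2 + M0 = X + dDR + X^T.
  by rewrite -XE /X !mulmxA mulmxV // mul1mx -mulmxA mulmxV // mulmx1.
have /(congr1 (fun M => Ri *m M *m Ri^T)) := dE.
rewrite !mulmxDr !mulmxDl.
have -> : Ri *m (dA^T *m DA *m A) *m Ri^T = M0^T.
  by rewrite /M0 !trmx_mul !trmxK (diagonal_trmx DAd) WE' !mulmxA.
have -> : Ri *m (A^T *m dDA *m A) *m Ri^T = M2.
  by rewrite /M2 WE' trmx_mul trmxK !mulmxA.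
have -> : Ri *m (A^T *m DA *m dA) *m Ri^T = M0 by rewrite /M0 WTE !mulmxA.
have -> : Ri *m (dR *m DR *m Rm^T) *m Ri^T = X by rewrite /X -!mulmxA RRi mulmx1.
have -> : Ri *m (Rm *m dDR *m Rm^T) *m Ri^T = dDR.
  by rewrite -!mulmxA RRi mulmx1 !mulmxA mulVmx // mul1mx.
have -> // : Ri *m (Rm *m DR *m dR^T) *m Ri^T = X^T.
by rewrite /X !trmx_mul (diagonal_trmx DRd) !mulmxA mulVmx // mul1mx.
Qed.

Section DiffUDDerive.
Variables (R : realFieldType) (V : normedModType R) (mwgs : mwgs_fun R).
Hypothesis mwgsP : MWGS_spec mwgs.
Variables (r s : nat) (A : V -> 'M[R]_(r, s)) (DA : V -> 'M[R]_r).
Variables (Rf DRf : V -> 'M[R]_s) (x v : V).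
Variables (dA : 'M[R]_(r, s)) (dDA : 'M[R]_r) (dR dDR : 'M[R]_s).
Hypotheses (DAp : forall t, posdiag (DA t)) (Ar : forall t, \rank (A t) = s).
Hypothesis RfE : forall t, (mwgs (A t) (DA t)).1.2 = Rf t.
Hypothesis DRfE : forall t, (mwgs (A t) (DA t)).2 = DRf t.
Hypotheses (Ad : is_derive x v A dA) (DAd : is_derive x v DA dDA).
Hypotheses (Rd : is_derive x v Rf dR) (DRd : is_derive x v DRf dDR).

Let mwgs_out t :
  [/\ unit_upper (Rf t), Defs.diagonal (DRf t) &
      (A t)^T *m DA t *m A t = Rf t *m DRf t *m (Rf t)^T].
Proof.
have := mwgsP (DAp t) (Ar t); rewrite -RfE -DRfE.
case: (mwgs _ _) => [[W Rm] DR] /= [AE Ru WE DRdiag _].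
by split=> //; exact: mwgs_gram AE WE.
Qed.

Let dR_strictly_upper : strictly_upper dR.
Proof.
move=> i j; rewrite leq_eqVlt => /orP[/eqP/val_inj ji|ji].
  rewrite ji; apply: (is_derive_mx_entry0 (c := 1)) Rd => t.
  by case: (mwgs_out t) => -[-> _].
apply: (is_derive_mx_entry0 (c := 0)) Rd => t.
by case: (mwgs_out t) => -[_ ->].
Qed.

Let dDR_diagonal : Defs.diagonal dDR.
Proof.
move=> i j ij; apply: (is_derive_mx_entry0 (c := 0)) DRd => t.
by case: (mwgs_out t) => _ ->.
Qed.

Lemma diffUD_derive : diffUD mwgs (A x) (DA x) dA dDA = (dR, dDR).
Proof.
have gram_d := is_derive_mulmx (is_derive_mulmx (is_derive_trmx Ad) DAd) Ad.
have gramE : (fun t => (A t)^T *m DA t *m A t) =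
    (fun t => Rf t *m DRf t *m (Rf t)^T).
  by apply/funext => t; case: (mwgs_out t).
rewrite gramE in gram_d.
have := is_derive_mulmx (is_derive_mulmx Rd DRd) (is_derive_trmx Rd).
move/is_derive_unique/(_ gram_d).
have := mwgsP (DAp x) (Ar x); rewrite -RfE -DRfE.
case E: (mwgs _ _) => [[W Rm] DR] /= [AE Ru WE DRdiag DRu] dE.
apply: (diffUD_eq E AE Ru WE DRdiag DRu _ dR_strictly_upper dDR_diagonal).
  by case: (DAp x).
by rewrite -!mulmxDl.
Qed.

End DiffUDDerive.

(** * Algorithm 2a *)

Section Alg2a.
Variables (R : realFieldType) (n m : nat) (mwgs : mwgs_fun R) (y : int -> 'cV[R]_m).
Implicit Types (P : params R n m).

Definition Tbar P := pT P - pS P *m invmx (pH P) *m pZ P.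
Definition Bbar P := pB P - pS P *m invmx (pH P) *m pbeta P.
Definition pre_A1 P (U : 'M[R]_n) := (row_mx (Tbar P *m U) (pUQ P))^T.
Definition pre_DA1 P (D : 'M[R]_n) := block_mx D 0 0 (pDQ P).
Definition pre_A2 P (Up : 'M[R]_n) := (block_mx Up 0 (pZ P *m Up) (pUH P))^T.
Definition pre_DA2 P (Dp : 'M[R]_n) := block_mx Dp 0 0 (pDH P).

Record ud_params P : Prop := UDParams {
  DPi0_posdiag : posdiag (pDPi0 P);
  UQ_unit_upper : unit_upper (pUQ P);
  DQ_posdiag : posdiag (pDQ P);
  UH_unit_upper : unit_upper (pUH P);
  DH_posdiag : posdiag (pDH P);
  H_unitmx : pH P \in unitmx
}.

Variables (P : params R n m) (k : nat) (a : 'cV[R]_n) (U D : 'M[R]_n).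
Let so := alg2a_step mwgs P y k (a, U, D).
Let mwgs2 := mwgs (pre_A2 P (U_pred so)) (pre_DA2 P (D_pred so)).

Lemma alg2a_stepE W1 Up Dp W2 R2 DR2 :
  mwgs (pre_A1 P U) (pre_DA1 P D) = (W1, Up, Dp) ->
  mwgs (pre_A2 P Up) (pre_DA2 P Dp) = (W2, R2, DR2) ->
  (let ap := Tbar P *m a + Bbar P *m y (Posz k - 1)
             + pS P *m invmx (pH P) *m y (Posz k) in
   let e := y (Posz k.+1) - pZ P *m ap - pbeta P *m y (Posz k) in
   let eb := invmx (drsubmx R2) *m e in
   so = StepOut ap W1 Up Dp W2 (ulsubmx R2) (ulsubmx DR2) (ursubmx R2)
          (drsubmx R2) (drsubmx DR2) e eb (ap + ursubmx R2 *m eb)).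
Proof.
rewrite /so /alg2a_step /pre_A1 /pre_DA1 /pre_A2 /pre_DA2 /Tbar /Bbar /=.
by move=> -> ->.
Qed.

Lemma alg2a_step_pred :
  a_pred so = Tbar P *m a + Bbar P *m y (Posz k - 1)
              + pS P *m invmx (pH P) *m y (Posz k) /\
  mwgs (pre_A1 P U) (pre_DA1 P D) = (W1 so, U_pred so, D_pred so).
Proof.
case E1: (mwgs (pre_A1 P U) (pre_DA1 P D)) => [[W1 Up] Dp].
case E2: (mwgs (pre_A2 P Up) (pre_DA2 P Dp)) => [[W2 R2] DR2].
by rewrite (alg2a_stepE E1 E2).
Qed.

Lemma alg2a_step_filt :
  [/\ ulsubmx mwgs2.1.2 = U_filt so, ursubmx mwgs2.1.2 = K_u so,
      drsubmx mwgs2.1.2 = U_Re so, ulsubmx mwgs2.2 = D_filt so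
    & drsubmx mwgs2.2 = D_Re so].
Proof.
case E1: (mwgs (pre_A1 P U) (pre_DA1 P D)) => [[W1 Up] Dp].
case E2: (mwgs (pre_A2 P Up) (pre_DA2 P Dp)) => [[W2 R2] DR2].
by rewrite /mwgs2 (alg2a_stepE E1 E2) /= E2.
Qed.

Lemma alg2a_step_update :
  [/\ e_inn so = y (Posz k.+1) - pZ P *m a_pred so - pbeta P *m y (Posz k),
      ebar so = invmx (U_Re so) *m e_inn so
    & a_filt so = a_pred so + K_u so *m ebar so].
Proof.
case E1: (mwgs (pre_A1 P U) (pre_DA1 P D)) => [[W1 Up] Dp].
case E2: (mwgs (pre_A2 P Up) (pre_DA2 P Dp)) => [[W2 R2] DR2].
by rewrite (alg2a_stepE E1 E2).
Qed.

Hypotheses (mwgsP : MWGS_spec mwgs) (Pud : ud_params P).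
Hypothesis Dp : posdiag D.

Lemma pre_DA1_posdiag : posdiag (pre_DA1 P D).
Proof. by apply: posdiag_block_mx => //; case: Pud. Qed.

(* Full rank comes from the block [pUQ P] alone: no invariant on [U] is
   needed. *)
Lemma pre_A1_rank : \rank (pre_A1 P U) = n.
Proof. by apply: rank_row_mx_unit_upper; case: Pud. Qed.

Lemma alg2a_step_pred_ud : unit_upper (U_pred so) /\ posdiag (D_pred so).
Proof.
have := mwgsP pre_DA1_posdiag pre_A1_rank; case: alg2a_step_pred => _ ->.
case=> _ Upu WE DpD DpU; split=> //.
exact: posdiag_gram pre_DA1_posdiag DpD DpU WE.
Qed.

Lemma pre_DA2_posdiag : posdiag (pre_DA2 P (D_pred so)).
Proof. by apply: posdiag_block_mx; [case: alg2a_step_pred_ud | case: Pud]. Qed.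

Lemma pre_A2_rank : \rank (pre_A2 P (U_pred so)) = (n + m)%N.
Proof.
by apply: rank_block_mx_unit_upper; [case: alg2a_step_pred_ud | case: Pud].
Qed.

Lemma alg2a_step_filt_ud :
  [/\ mwgs2.1.2 = block_mx (U_filt so) (K_u so) 0 (U_Re so),
      mwgs2.2 = block_mx (D_filt so) 0 0 (D_Re so),
      posdiag (D_filt so) & unit_upper (U_Re so)].
Proof.
have := mwgsP pre_DA2_posdiag pre_A2_rank; rewrite -/mwgs2.
case: alg2a_step_filt; case: mwgs2 => [[W2 R2] DR2] /= <- <- <- <- <-.
case=> _ R2u WE DR2d DR2U; have DR2p := posdiag_gram pre_DA2_posdiag DR2d DR2U WE.
split; [exact: unit_upper_submxK | exact: diagonal_submxK | | ].
- exact: posdiag_ulsubmx.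
- exact: unit_upper_drsubmx.
Qed.

End Alg2a.

Lemma alg2a_state_ud (R : realFieldType) n m (mwgs : mwgs_fun R)
    (P : params R n m) (y : int -> 'cV[R]_m) k :
  MWGS_spec mwgs -> ud_params P -> posdiag (alg2a_state mwgs P y k).2.
Proof.
move=> mwgsP Pud; elim: k => [|k IHk] /=; first exact: (DPi0_posdiag Pud).
move: IHk; case: (alg2a_state _ _ _ _) => [[a U] D] /= Dp.
by case: (alg2a_step_filt_ud y k a U mwgsP Pud Dp).
Qed.

(** * Algorithm 2b *)

Section ParamsDerive.
Variables (R : realFieldType) (V : normedModType R) (n m : nat).

Record params_derive (Pf : V -> params R n m) (x v : V) (dP : params R n m)
    : Prop := ParamsDerive {
  is_derive_pT : is_derive x v (fun t => pT (Pf t)) (pT dP);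
  is_derive_pB : is_derive x v (fun t => pB (Pf t)) (pB dP);
  is_derive_pZ : is_derive x v (fun t => pZ (Pf t)) (pZ dP);
  is_derive_pbeta : is_derive x v (fun t => pbeta (Pf t)) (pbeta dP);
  is_derive_pS : is_derive x v (fun t => pS (Pf t)) (pS dP);
  is_derive_pH : is_derive x v (fun t => pH (Pf t)) (pH dP);
  is_derive_palpha0 : is_derive x v (fun t => palpha0 (Pf t)) (palpha0 dP);
  is_derive_pUPi0 : is_derive x v (fun t => pUPi0 (Pf t)) (pUPi0 dP);
  is_derive_pDPi0 : is_derive x v (fun t => pDPi0 (Pf t)) (pDPi0 dP);
  is_derive_pUH : is_derive x v (fun t => pUH (Pf t)) (pUH dP);
  is_derive_pDH : is_derive x v (fun t => pDH (Pf t)) (pDH dP);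
  is_derive_pUQ : is_derive x v (fun t => pUQ (Pf t)) (pUQ dP);
  is_derive_pDQ : is_derive x v (fun t => pDQ (Pf t)) (pDQ dP)
}.

(* Written exactly as the let-bound terms of [alg2b_step], to which they are
   therefore convertible. *)
Definition dHinv (P dP : params R n m) :=
  - (invmx (pH P) *m pH dP *m invmx (pH P)).
Definition dTbar (P dP : params R n m) :=
  pT dP - (pS dP *m invmx (pH P) *m pZ P + pS P *m dHinv P dP *m pZ P
           + pS P *m invmx (pH P) *m pZ dP).
Definition dBbar (P dP : params R n m) :=
  pB dP - (pS dP *m invmx (pH P) *m pbeta P + pS P *m dHinv P dP *m pbeta P
           + pS P *m invmx (pH P) *m pbeta dP).

Variables (Pf : V -> params R n m) (x v : V) (dP : params R n m).
Hypotheses (PfH : forall t, pH (Pf t) \in unitmx) (Pfd : params_derive Pf x v dP).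

Lemma is_derive_Hinv :
  is_derive x v (fun t => invmx (pH (Pf t))) (dHinv (Pf x) dP).
Proof. exact: is_derive_invmx PfH (is_derive_pH Pfd). Qed.

Lemma is_derive_Tbar : is_derive x v (fun t => Tbar (Pf t)) (dTbar (Pf x) dP).
Proof.
have SHZd := is_derive_mulmx (is_derive_mulmx (is_derive_pS Pfd) is_derive_Hinv)
  (is_derive_pZ Pfd).
by apply: is_derive_eq (is_deriveB (is_derive_pT Pfd) SHZd) _; rewrite mulmxDl.
Qed.

Lemma is_derive_Bbar : is_derive x v (fun t => Bbar (Pf t)) (dBbar (Pf x) dP).
Proof.
have SHbd := is_derive_mulmx (is_derive_mulmx (is_derive_pS Pfd) is_derive_Hinv)
  (is_derive_pbeta Pfd).
by apply: is_derive_eq (is_deriveB (is_derive_pB Pfd) SHbd) _; rewrite mulmxDl.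
Qed.

End ParamsDerive.

Definition is_sensitivity (R : realFieldType) (V : normedModType R) (n m : nat)
    (x v : V) (so : V -> step_out R n m) (ds : dstep_out R n m) : Prop :=
  [/\ is_derive x v (fun t => a_pred (so t)) (d_a_pred ds),
      is_derive x v (fun t => U_pred (so t)) (d_U_pred ds),
      is_derive x v (fun t => D_pred (so t)) (d_D_pred ds),
      is_derive x v (fun t => U_filt (so t)) (d_U_filt ds)
    & is_derive x v (fun t => D_filt (so t)) (d_D_filt ds)] /\
  [/\ is_derive x v (fun t => U_Re (so t)) (d_U_Re ds),
      is_derive x v (fun t => D_Re (so t)) (d_D_Re ds),
      is_derive x v (fun t => K_u (so t)) (d_K_u ds),
      is_derive x v (fun t => ebar (so t)) (d_ebar ds)
    & is_derive x v (fun t => a_filt (so t)) (d_a_filt ds)].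

Record step_derivable (R : realFieldType) (V : normedModType R) (n m : nat)
    (so : V -> step_out R n m) (x v : V) : Prop := StepDerivable {
  U_pred_derivable : derivable (fun t => U_pred (so t)) x v;
  D_pred_derivable : derivable (fun t => D_pred (so t)) x v;
  U_filt_derivable : derivable (fun t => U_filt (so t)) x v;
  D_filt_derivable : derivable (fun t => D_filt (so t)) x v;
  K_u_derivable : derivable (fun t => K_u (so t)) x v;
  U_Re_derivable : derivable (fun t => U_Re (so t)) x v;
  D_Re_derivable : derivable (fun t => D_Re (so t)) x v
}.

Section Alg2bStep.
Variables (R : realFieldType) (V : normedModType R) (n m : nat).
Variables (mwgs : mwgs_fun R) (y : int -> 'cV[R]_m).
Hypothesis mwgsP : MWGS_spec mwgs.
Variables (Pf : V -> params R n m) (x v : V) (dP : params R n m).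
Hypotheses (Pfud : forall t, ud_params (Pf t)) (Pfd : params_derive Pf x v dP).
Variables (k : nat) (a : V -> 'cV[R]_n) (U D : V -> 'M[R]_n).
Variables (da : 'cV[R]_n) (dU dD : 'M[R]_n).
Hypothesis Dp : forall t, posdiag (D t).
Hypotheses (ad : is_derive x v a da) (Ud : is_derive x v U dU)
  (Dd : is_derive x v D dD).

Let P := Pf x.
Let so t := alg2a_step mwgs (Pf t) y k (a t, U t, D t).

Hypothesis sod : step_derivable so x v.

Let dUp := 'D_v (fun t => U_pred (so t)) x.
Let dDp := 'D_v (fun t => D_pred (so t)) x.
Let dUf := 'D_v (fun t => U_filt (so t)) x.
Let dDf := 'D_v (fun t => D_filt (so t)) x.
Let dK := 'D_v (fun t => K_u (so t)) x.
Let dURe := 'D_v (fun t => U_Re (so t)) x.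
Let dDRe := 'D_v (fun t => D_Re (so t)) x.

Let Upd : is_derive x v (fun t => U_pred (so t)) dUp.
Proof. exact: derivableP (U_pred_derivable sod). Qed.
Let Dpd : is_derive x v (fun t => D_pred (so t)) dDp.
Proof. exact: derivableP (D_pred_derivable sod). Qed.
Let Ufd : is_derive x v (fun t => U_filt (so t)) dUf.
Proof. exact: derivableP (U_filt_derivable sod). Qed.
Let Dfd : is_derive x v (fun t => D_filt (so t)) dDf.
Proof. exact: derivableP (D_filt_derivable sod). Qed.
Let Kd : is_derive x v (fun t => K_u (so t)) dK.
Proof. exact: derivableP (K_u_derivable sod). Qed.
Let URed : is_derive x v (fun t => U_Re (so t)) dURe.
Proof. exact: derivableP (U_Re_derivable sod). Qed.
Let DRed : is_derive x v (fun t => D_Re (so t)) dDRe.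
Proof. exact: derivableP (D_Re_derivable sod). Qed.

Let PfH t : pH (Pf t) \in unitmx. Proof. exact: H_unitmx. Qed.
Let step_pred t := alg2a_step_pred mwgs y (Pf t) k (a t) (U t) (D t).
Let step_update t := alg2a_step_update mwgs y (Pf t) k (a t) (U t) (D t).
Let step_filt_ud t := alg2a_step_filt_ud y k (a t) (U t) mwgsP (Pfud t) (Dp t).

Lemma diffUD_pre1 :
  diffUD mwgs (pre_A1 P (U x)) (pre_DA1 P (D x))
    (row_mx (dTbar P dP *m U x + Tbar P *m dU) (pUQ dP))^T
    (block_mx dD 0 0 (pDQ dP)) = (dUp, dDp).
Proof.
apply: (@diffUD_derive _ _ _ mwgsP _ _
  (fun t => pre_A1 (Pf t) (U t)) (fun t => pre_DA1 (Pf t) (D t))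
  (fun t => U_pred (so t)) (fun t => D_pred (so t))).
- by move=> t; apply: pre_DA1_posdiag.
- by move=> t; apply: pre_A1_rank.
- by move=> t; case: (step_pred t) => _ ->.
- by move=> t; case: (step_pred t) => _ ->.
- apply: is_derive_trmx; apply: is_derive_row_mx (is_derive_pUQ Pfd).
  exact: is_derive_mulmx (is_derive_Tbar PfH Pfd) Ud.
- exact: is_derive_block_mx Dd (is_derive_cst _ _ _) (is_derive_cst _ _ _)
    (is_derive_pDQ Pfd).
- exact: Upd.
- exact: Dpd.
Qed.

Lemma diffUD_pre2 :
  diffUD mwgs (pre_A2 P (U_pred (so x))) (pre_DA2 P (D_pred (so x)))
    (block_mx dUp 0 (pZ dP *m U_pred (so x) + pZ P *m dUp) (pUH dP))^T
    (block_mx dDp 0 0 (pDH dP)) =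
  (block_mx dUf dK 0 dURe, block_mx dDf 0 0 dDRe).
Proof.
apply: (@diffUD_derive _ _ _ mwgsP _ _
  (fun t => pre_A2 (Pf t) (U_pred (so t)))
  (fun t => pre_DA2 (Pf t) (D_pred (so t)))
  (fun t => block_mx (U_filt (so t)) (K_u (so t)) 0 (U_Re (so t)))
  (fun t => block_mx (D_filt (so t)) 0 0 (D_Re (so t)))).
- by move=> t; apply: pre_DA2_posdiag.
- by move=> t; apply: pre_A2_rank.
- by move=> t; case: (step_filt_ud t).
- by move=> t; case: (step_filt_ud t).
- apply: is_derive_trmx.
  apply: is_derive_block_mx Upd (is_derive_cst _ _ _) _ (is_derive_pUH Pfd).
  exact: is_derive_mulmx (is_derive_pZ Pfd) Upd.
- exact: is_derive_block_mx Dpd (is_derive_cst _ _ _)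
    (is_derive_cst _ _ _) (is_derive_pDH Pfd).
- exact: is_derive_block_mx Ufd Kd (is_derive_cst _ _ _) URed.
- exact: is_derive_block_mx Dfd (is_derive_cst _ _ _)
    (is_derive_cst _ _ _) DRed.
Qed.

Let Hinv := invmx (pH P).
Let dap := dTbar P dP *m a x + Tbar P *m da + dBbar P dP *m y (Posz k - 1)
  + pS dP *m Hinv *m y (Posz k) - pS P *m Hinv *m pH dP *m Hinv *m y (Posz k).
Let UReinv := invmx (U_Re (so x)).
Let deb := - (UReinv *m dURe *m UReinv *m e_inn (so x))
  - UReinv *m (pZ dP *m a_pred (so x) + pZ P *m dap + pbeta dP *m y (Posz k)).
Let daf := dap + dK *m ebar (so x) + K_u (so x) *m deb.

Lemma alg2b_stepE : alg2b_step mwgs P dP y k (a x, U x, D x) (da, dU, dD) =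
  DStepOut dap dUp dDp dUf dDf dURe dDRe dK deb daf.
Proof.
(* No delta: the [diffUD] calls are exposed while [alg2a_step] stays folded. *)
rewrite /alg2b_step; cbv beta iota zeta.
rewrite diffUD_pre1; cbv beta iota zeta.
by rewrite diffUD_pre2 !block_mxKul !block_mxKur !block_mxKdr.
Qed.

Lemma is_derive_a_pred : is_derive x v (fun t => a_pred (so t)) dap.
Proof.
have -> : (fun t => a_pred (so t)) = (fun t => Tbar (Pf t) *m a t
    + Bbar (Pf t) *m y (Posz k - 1) + pS (Pf t) *m invmx (pH (Pf t)) *m y (Posz k)).
  by apply/funext => t; case: (step_pred t).
have SHd := is_derive_mulmx (is_derive_pS Pfd) (is_derive_Hinv PfH Pfd).
apply: is_derive_eq (is_deriveD (is_deriveD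
  (is_derive_mulmx (is_derive_Tbar PfH Pfd) ad)
  (is_derive_mulmx (is_derive_Bbar PfH Pfd) (is_derive_cst _ _ _)))
  (is_derive_mulmx SHd (is_derive_cst _ _ _))) _.
by rewrite !mulmx0 !addr0 mulmxDl /dHinv mulmxN mulNmx !mulmxA addrA.
Qed.

Let URe_unitmx t : U_Re (so t) \in unitmx.
Proof.
apply: unit_upper_unitmx.
by case: (step_filt_ud t).
Qed.

Lemma is_derive_ebar : is_derive x v (fun t => ebar (so t)) deb.
Proof.
have -> : (fun t => ebar (so t)) = (fun t => invmx (U_Re (so t)) *m
    (y (Posz k.+1) - pZ (Pf t) *m a_pred (so t) - pbeta (Pf t) *m y (Posz k))).
  by apply/funext => t; case: (step_update t) => <- -> _.
have ed := is_deriveB (is_deriveB (is_derive_cst (y (Posz k.+1)) x v)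
  (is_derive_mulmx (is_derive_pZ Pfd) is_derive_a_pred))
  (is_derive_mulmx (is_derive_pbeta Pfd) (is_derive_cst (y (Posz k)) x v)).
apply: is_derive_eq (is_derive_mulmx (is_derive_invmx URe_unitmx URed) ed) _.
rewrite mulNmx mulmx0 addr0 sub0r -opprD mulmxN.
congr (- (_ *m _) - _).
by case: (step_update x).
Qed.

Lemma is_derive_a_filt : is_derive x v (fun t => a_filt (so t)) daf.
Proof.
have -> : (fun t => a_filt (so t)) =
    (fun t => a_pred (so t) + K_u (so t) *m ebar (so t)).
  by apply/funext => t; case: (step_update t).
apply: is_derive_eq (is_deriveD is_derive_a_pred
  (is_derive_mulmx Kd is_derive_ebar)) _.
by rewrite addrA.
Qed.

Lemma alg2b_step_correct :
  is_sensitivity x v so (alg2b_step mwgs P dP y k (a x, U x, D x) (da, dU, dD)).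
Proof.
rewrite /is_sensitivity alg2b_stepE.
split; split; first [assumption | exact: is_derive_a_pred
  | exact: is_derive_ebar | exact: is_derive_a_filt].
Qed.

End Alg2bStep.

Section Alg2bCorrect.
Variables (R : realFieldType) (V : normedModType R) (n m : nat).
Variables (mwgs : mwgs_fun R) (y : int -> 'cV[R]_m).
Hypothesis mwgsP : MWGS_spec mwgs.
Variables (Pf : V -> params R n m) (x v : V) (dP : params R n m) (N : nat).
Hypotheses (Pfud : forall t, ud_params (Pf t)) (Pfd : params_derive Pf x v dP).
Hypothesis alg2a_derivable :
  forall k, (k < N)%N -> step_derivable (fun t => alg2a mwgs (Pf t) y k) x v.

Lemma alg2b_correct_of_state k : (k < N)%N ->
  let sa t := alg2a_state mwgs (Pf t) y k in
  let ds := alg2b_state mwgs (Pf x) dP y k in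
  [/\ is_derive x v (fun t => (sa t).1.1) ds.1.1,
      is_derive x v (fun t => (sa t).1.2) ds.1.2
    & is_derive x v (fun t => (sa t).2) ds.2] ->
  is_sensitivity x v (fun t => alg2a mwgs (Pf t) y k) (alg2b mwgs (Pf x) dP y k).
Proof.
move=> kN sa ds [sad sUd sDd].
set a := fun t => alg2a mwgs (Pf t) y k; set d := alg2b mwgs (Pf x) dP y k.
have tripleE (T1 T2 T3 : Type) (s : T1 * T2 * T3) : s = (s.1.1, s.1.2, s.2).
  by case: s => [[]].
have saE t := tripleE _ _ _ (sa t); have dsE := tripleE _ _ _ ds.
have aE : a = fun t =>
    alg2a_step mwgs (Pf t) y k ((sa t).1.1, (sa t).1.2, (sa t).2).
  by apply/funext => t; rewrite /a /alg2a -saE.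
have := alg2a_derivable kN; rewrite -/a aE => sod.
have -> : d = alg2b_step mwgs (Pf x) dP y k ((sa x).1.1, (sa x).1.2, (sa x).2)
                (ds.1.1, ds.1.2, ds.2).
  by rewrite /d /alg2b -saE -dsE.
apply: alg2b_step_correct => // t.
exact: alg2a_state_ud.
Qed.

Lemma alg2b_state_correct k : (k <= N)%N ->
  let sa t := alg2a_state mwgs (Pf t) y k in
  let ds := alg2b_state mwgs (Pf x) dP y k in
  [/\ is_derive x v (fun t => (sa t).1.1) ds.1.1,
      is_derive x v (fun t => (sa t).1.2) ds.1.2
    & is_derive x v (fun t => (sa t).2) ds.2].
Proof.
elim: k => [|k IHk] kN /=.
  by split; [exact: is_derive_palpha0 Pfd | exact: is_derive_pUPi0 Pfd
            | exact: is_derive_pDPi0 Pfd].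
by have [[_ _ _ ? ?] [_ _ _ _ ?]] := alg2b_correct_of_state kN (IHk (ltnW kN)).
Qed.

Lemma alg2b_correct k : (k < N)%N ->
  is_sensitivity x v (fun t => alg2a mwgs (Pf t) y k) (alg2b mwgs (Pf x) dP y k).
Proof.
by move=> kN; apply: alg2b_correct_of_state kN (alg2b_state_correct (ltnW kN)).
Qed.

End Alg2bCorrect.

Lemma UDU_unitmx (R : realFieldType) n (U D P : 'M[R]_n) :
  UDU U D P -> P \in unitmx.
Proof.
case=> Uu [Dp ->].
by rewrite !unitmx_mul unitmx_tr unit_upper_unitmx // posdiag_unitmx.
Qed.

Unset Implicit Arguments.

Theorem proposition3 (R : realType) (n m p N : nat)
    (T : 'rV[R]_p -> 'M[R]_n) (B : 'rV[R]_p -> 'M[R]_(n, m))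
    (Z : 'rV[R]_p -> 'M[R]_(m, n)) (beta : 'rV[R]_p -> 'M[R]_m)
    (Q : 'rV[R]_p -> 'M[R]_n) (S : 'rV[R]_p -> 'M[R]_(n, m))
    (H : 'rV[R]_p -> 'M[R]_m)
    (alpha0 : 'rV[R]_p -> 'cV[R]_n) (Pi0 : 'rV[R]_p -> 'M[R]_n)
    (UPi0 DPi0 : 'rV[R]_p -> 'M[R]_n) (UH DH : 'rV[R]_p -> 'M[R]_m)
    (UQ DQ : 'rV[R]_p -> 'M[R]_n)
    (y : int -> 'cV[R]_m) (mwgs : mwgs_fun R) :
  (* MWGS behaves as specified *)
  MWGS_spec mwgs ->
  (* model assumptions, for every theta *)
  (forall th, psd (block_mx (Q th) (S th) (S th)^T (H th))) ->
  (forall th, posdef (Pi0 th)) ->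
  (forall th, posdef (H th)) ->
  (* UDU^T factorizations used by Algorithm 2a *)
  (forall th, UDU (UPi0 th) (DPi0 th) (Pi0 th)) ->
  (forall th, UDU (UH th) (DH th) (H th)) ->
  (forall th, UDU (UQ th) (DQ th) (Qbar (Q th) (S th) (H th))) ->
  (* differentiable dependence on theta *)
  (forall th, [/\ differentiable T th, differentiable B th, differentiable Z th,
                  differentiable beta th & differentiable Q th]) ->
  (forall th, [/\ differentiable S th, differentiable H th,
                  differentiable alpha0 th & differentiable Pi0 th]) ->
  (forall th, [/\ differentiable UPi0 th, differentiable DPi0 th,
                  differentiable UH th & differentiable DH th]) ->
  (forall th, differentiable UQ th /\ differentiable DQ th) ->
  let Pf := params_at T B Z beta S H alpha0 UPi0 DPi0 UH DH UQ DQ in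
  let dPf := dparams_at T B Z beta S H alpha0 UPi0 DPi0 UH DH UQ DQ in
  alg2a_differentiable mwgs Pf y N ->
  forall (th : 'rV[R]_p) (i : 'I_p) (k : nat), (k < N)%N ->
    let a := fun th' => alg2a mwgs (Pf th') y k in
    let d := alg2b mwgs (Pf th) (dPf th i) y k in
    let e := unitdir R i in
    [/\ is_derive th e (fun th' => a_pred (a th')) (d_a_pred d),
            is_derive th e (fun th' => U_pred (a th')) (d_U_pred d),
            is_derive th e (fun th' => D_pred (a th')) (d_D_pred d),
            is_derive th e (fun th' => U_filt (a th')) (d_U_filt d)
          & is_derive th e (fun th' => D_filt (a th')) (d_D_filt d)] /\
        [/\ is_derive th e (fun th' => U_Re (a th')) (d_U_Re d),
            is_derive th e (fun th' => D_Re (a th')) (d_D_Re d),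
            is_derive th e (fun th' => K_u (a th')) (d_K_u d),
            is_derive th e (fun th' => ebar (a th')) (d_ebar d)
          & is_derive th e (fun th' => a_filt (a th')) (d_a_filt d)].
Proof.
move=> mwgsP _ _ _ Pi0UD HUD QUD dTBZbQ dSHaPi dUD dUDQ Pf dPf alg2a_d th i k kN.
have Pfud t : ud_params (Pf t).
  have [_ [DPi0p _]] := Pi0UD t; have [UQu [DQp _]] := QUD t.
  by have [UHu [DHp _]] := HUD t; split=> //; apply: UDU_unitmx (HUD t).
have Pfd : params_derive Pf th (unitdir R i) (dPf th i).
  have [dT dB dZ dbeta _] := dTBZbQ th; have [dS dH dalpha0 _] := dSHaPi th.
  have [dUPi0 dDPi0 dUH dDH] := dUD th; have [dUQ dDQ] := dUDQ th.
  by split; apply: derivableP; exact: diff_derivable.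
move=> a d e; apply: (alg2b_correct mwgsP Pfud Pfd _ kN) => k' k'N.
have [[_ _ dUp dDp] [_ dUf dDf dK] [dURe dDRe _] _] := alg2a_d k' th k'N.
by split; exact: diff_derivable.
Qed.
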